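(* Let $k$ be an algebraically closed field and $\underline{x},\underline{y}$ sequences of positive integers, and let $C_n=C_n(\underline{x},\underline{y})$ be the Cartan matrix of $A_n(\underline{x},\underline{y})$. Then for $m\geq1$, $$C_{2m}= C_{2m-1}\begin{pmatrix} 1 & y_m \\ 0 & 1 \end{pmatrix} = \begin{pmatrix} F_{2m-1}(\underline{y},S\underline{x}) & F_{2m}(\underline{y},S\underline{x}) \\ F_{2m}(\underline{x},\underline{y}) & F_{2m+1}(\underline{x},\underline{y}) \end{pmatrix},$$ and for $m\geq 0$ (with $C_0$ the identity matrix) $$C_{2m+1}=C_{2m}\begin{pmatrix} 1 & 0 \\ x_{m+1} & 1 \end{pmatrix} = \begin{pmatrix} F_{2m+1}(\underline{y},S\underline{x}) & F_{2m}(\underline{y},S\underline{x})\\ F_{2m+2}(\underline{x},\underline{y}) & F_{2m+1}(\underline{x},\underline{y}) \end{pmatrix}.$$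
   Context: Paths are composed right to left: for arrows $\rho,\sigma$, $\rho\sigma$ denotes the path $\sigma$ followed by $\rho$. For sequences of positive integers $\underline{x}=(x_1,x_2,\dots)$, $\underline{y}=(y_1,y_2,\dots)$ and $n\geq0$, $A_n(\underline{x},\underline{y})$ is the quotient of the path algebra of the quiver with vertices $1,2$, arrows $\alpha_{i,j}:1\to2$ ($1\le i\le\lfloor\frac{n+1}{2}\rfloor$, $1\le j\le x_i$) and arrows $\beta_{i,j}:2\to1$ ($1\le i\le\lfloor\frac n2\rfloor$, $1\le j\le y_i$), by the ideal generated by $\alpha_{i,j}\beta_{i',j'}$ for $i'<i$ and $\beta_{i',j'}\alpha_{i,j}$ for $i\le i'$ (all admissible $j,j'$). With $e_1,e_2$ the trivial paths, the Cartan matrix is $C_n(\underline{x},\underline{y})=(c_{ij})$, $c_{ij}=\dim_k e_iA_n(\underline{x},\underline{y})e_j$ (the number of nonzero paths from $j$ to $i$). For sequences $\underline{u},\underline{v}$, the generalized Fibonacci numbers are $F_0(\underline{u},\underline{v})=0$, $F_1(\underline{u},\underline{v})=1$, $F_{2m}(\underline{u},\underline{v})=F_{2m-2}(\underline{u},\underline{v})+F_{2m-1}(\underline{u},\underline{v})u_m$, $F_{2m+1}(\underline{u},\underline{v})=F_{2m-1}(\underline{u},\underline{v})+F_{2m}(\underline{u},\underline{v})v_m$ for $m\geq1$. $S\underline{x}=(x_2,x_3,\dots)$ is the shift. *)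

From mathcomp Require Import all_boot all_order all_algebra.
Set Implicit Arguments. Unset Strict Implicit. Unset Printing Implicit Defensive.
Import GRing.Theory.

(* Sequences of positive integers are functions nat -> nat, 1-indexed:
   x_i = x i for i >= 1 (x 0 is unused). *)

Definition shiftS (x : nat -> nat) : nat -> nat := fun i => x i.+1.

(* Generalized Fibonacci numbers: fib2 u v k = (F_k, F_{k+1}). *)
Fixpoint fib2 (u v : nat -> nat) (k : nat) : nat * nat :=
  match k with
  | 0 => (0, 1)
  | k'.+1 =>
      let: (a, b) := fib2 u v k' in
      (b, a + b * (if odd k'.+2 then v (k'.+2)./2 else u (k'.+2)./2))
  end.

Definition Fib (k : nat) (u v : nat -> nat) : nat := (fib2 u v k).1.

(* Arrows of the quiver of A_n(x,y): (true, i, j) = alpha_{i,j} : 1 -> 2,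
   (false, i, j) = beta_{i,j} : 2 -> 1. *)
Definition arrow := (bool * nat * nat)%type.

Definition valid_arrow (n : nat) (x y : nat -> nat) (a : arrow) : bool :=
  let: (b, i, j) := a in
  if b then [&& 1 <= i, i <= n.+1./2, 1 <= j & j <= x i]
  else [&& 1 <= i, i <= n./2, 1 <= j & j <= y i].

Definition src (a : arrow) : nat := if a.1.1 then 1 else 2.
Definition tgt (a : arrow) : nat := if a.1.1 then 2 else 1.

(* [ok a b]: the path "a followed by b" (i.e. the product b a, composed
   right to left) is composable and is not one of the generating relations
   alpha_{i,j} beta_{i',j'} (i' < i) or beta_{i',j'} alpha_{i,j} (i <= i'). *)
Definition ok (a b : arrow) : bool :=
  (tgt a == src b) &&
  (if a.1.1 then ~~ (a.1.2 <= b.1.2)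
   else ~~ (a.1.2 < b.1.2)).

Fixpoint ok_chain (a : arrow) (p : seq arrow) : bool :=
  match p with
  | [::] => true
  | b :: p' => ok a b && ok_chain b p'
  end.

(* A path is a list of arrows in traversal order (first arrow first).
   [nonzero_path n x y s t p]: p is a path from vertex s to vertex t of the
   quiver of A_n(x,y) that is nonzero in A_n(x,y), i.e. contains no
   generator of the (monomial) ideal as a subpath.  The empty list is the
   trivial path e_s (requires s = t). *)
Definition nonzero_path (n : nat) (x y : nat -> nat) (s t : nat)
  (p : seq arrow) : bool :=
  all (valid_arrow n x y) p &&
  match p with
  | [::] => (s == t) && ((s == 1) || (s == 2))
  | a :: p' => (src a == s) && (tgt (last a p') == t) && ok_chain a p'
  end.

Definition has_card (P : pred (seq arrow)) (N : nat) : Prop :=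
  exists s : seq (seq arrow), [/\ uniq s, forall p, (p \in s) = P p & size s = N].

Definition vtx (k : 'I_2) : nat := k.+1.

(* C is the Cartan matrix of A_n(x,y): c_{ij} = dim e_i A e_j = number of
   nonzero paths from j to i. *)
Definition is_cartan (n : nat) (x y : nat -> nat) (C : 'M[nat]_2) : Prop :=
  forall i j : 'I_2, has_card (nonzero_path n x y (vtx j) (vtx i)) (C i j).

Definition mx2 (a b c d : nat) : 'M[nat]_2 :=
  \matrix_(i < 2, j < 2)
    if (i == 0 :> nat) then (if (j == 0 :> nat) then a else b)
    else (if (j == 0 :> nat) then c else d).

From mathcomp Require Import all_boot all_order all_algebra.
From mathcomp Require Import zify.
Set Implicit Arguments. Unset Strict Implicit. Unset Printing Implicit Defensive.

(* Passing from A_n to A_{n+1} adds one block of parallel arrows between the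
   two vertices, all of the largest index of their kind.  By the shape of the
   relations such a new arrow can only occur as the first arrow of a nonzero
   path, and it can be followed by any nonzero path of A_n starting at its
   target.  Hence C_{n+1} = C_n S_n for an elementary matrix S_n, and the
   closed forms follow by induction, the generalized Fibonacci numbers obeying
   the same two-step recursion. *)

Section HasCard.
Implicit Types (P Q : pred (seq arrow)) (N M : nat).

Lemma has_card_inj P N M : has_card P N -> has_card P M -> N = M.
Proof.
move=> [s1 [U1 M1 <-]] [s2 [U2 M2 <-]]; apply: perm_size; apply: uniq_perm => // p.
by rewrite M1 M2.
Qed.

Lemma has_card_ext P Q N : P =1 Q -> has_card P N -> has_card Q N.
Proof. by move=> PQ [s [U M S]]; exists s; split=> // p; rewrite M PQ. Qed.

Lemma has_card_or P Q N M : (forall p, P p -> Q p = false) ->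
  has_card P N -> has_card Q M -> has_card (fun p => P p || Q p) (N + M).
Proof.
move=> PQ [s [U Ms <-]] [t [V Mt <-]]; exists (s ++ t); split.
- rewrite cat_uniq U V andbT; apply/hasPn => p; rewrite Mt Ms.
  by case Pp: (P p) => //; rewrite (PQ p Pp).
- by move=> p; rewrite mem_cat Ms Mt.
- by rewrite size_cat.
Qed.

Lemma has_card_andl (b : bool) P N : has_card P N -> has_card (fun p => b && P p) (b * N).
Proof.
case: b => [|_]; first by rewrite mul1n; apply: has_card_ext.
by exists [::].
Qed.

Definition prepend (A : seq arrow) P : pred (seq arrow) :=
  fun p => if p is a :: q then (a \in A) && P q else false.

Lemma has_card_prepend A P N : uniq A -> has_card P N -> has_card (prepend A P) (size A * N).
Proof.
move=> UA [s [U M <-]]; exists [seq a :: q | a <- A, q <- s]; split.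
- by apply: allpairs_uniq => // [[a q] [b r]] _ _ [-> ->].
- case=> [|a q] /=.
    by apply/negbTE/allpairsPdep => -[? [? [_ _]]].
  apply/allpairsPdep/andP => [[b [r [Hb Hr [-> ->]]]] | [Ha Hq]]; first by rewrite -M.
  by exists a, q; rewrite M.
- by rewrite size_allpairs.
Qed.

End HasCard.

Section NonzeroPaths.
Variables x y : nat -> nat.
Implicit Types (n : nat) (a b : arrow) (p q : seq arrow).

Local Notation valid n := (valid_arrow n x y).

Lemma valid_arrow0 a : valid 0 a = false.
Proof. by case: a => [[[] i] j] /=; lia. Qed.

Lemma valid_arrowS n a : valid n a -> valid n.+1 a.
Proof. by case: a => [[[] i] j] /=; lia. Qed.

Lemma ok_valid_arrow n a b : valid n.+1 a -> valid n.+1 b -> ok a b -> valid n b.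
Proof. by case: a => [[[] i] j]; case: b => [[[] i'] j'] /=; rewrite /ok /src /tgt /=; lia. Qed.

Lemma ok_new_arrow n a b : valid n.+1 a -> ~~ valid n a -> valid n b -> ok a b = (tgt a == src b).
Proof. by case: a => [[[] i] j]; case: b => [[[] i'] j'] /=; rewrite /ok /src /tgt /=; lia. Qed.

Lemma all_valid_chain n a q : valid n.+1 a -> ok_chain a q ->
  all (valid n.+1) q = all (valid n) q.
Proof.
elim: q a => [//|b q IH] a Ha /= /andP[Hab Hq].
apply/andP/andP => [[Hb Hqb] | [Hb Hqb]]; last first.
  by split; [exact: valid_arrowS | rewrite (IH b) // valid_arrowS].
have Hb' := ok_valid_arrow Ha Hb Hab.
by split; last by rewrite -(IH b).
Qed.

Definition new_arrows n : seq arrow :=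
  if odd n then [seq (false, n.+1./2, j) | j <- iota 1 (y n.+1./2)]
  else [seq (true, n./2.+1, j) | j <- iota 1 (x n./2.+1)].

Definition new_src n := if odd n then 2 else 1.
Definition new_tgt n := if odd n then 1 else 2.

Lemma mem_new_arrows n a : (a \in new_arrows n) = valid n.+1 a && ~~ valid n a.
Proof.
have mem_map_j (b0 b : bool) (i0 i j : nat) (s : seq nat) :
    ((b, i, j) \in [seq (b0, i0, j) | j <- s]) = [&& b == b0, i == i0 & j \in s].
  apply/mapP/and3P => [[j' Hj [-> -> ->]] | [/eqP-> /eqP-> Hj]]; first by rewrite !eqxx.
  by exists j.
case: a => [[b i] j]; rewrite /new_arrows.
case: ifP => Ho; rewrite mem_map_j mem_iota; case: b => /=; try lia.
  by case: (eqVneq i (uphalf n)) => [->|]; lia.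
by case: (eqVneq i n./2.+1) => [->|]; lia.
Qed.

Lemma new_arrows_uniq n : uniq (new_arrows n).
Proof. by rewrite /new_arrows; case: ifP => _; rewrite map_inj_uniq ?iota_uniq // => i j []. Qed.

Lemma size_new_arrows n : size (new_arrows n) = if odd n then y n.+1./2 else x n./2.+1.
Proof. by rewrite /new_arrows; case: ifP => _; rewrite size_map size_iota. Qed.

Lemma new_arrow_ends n a : a \in new_arrows n -> src a = new_src n /\ tgt a = new_tgt n.
Proof. by rewrite /new_arrows /new_src /new_tgt; case: ifP => _ /mapP [j _ ->]. Qed.

Lemma nonzero_path_old n s t a q : valid n a ->
  nonzero_path n.+1 x y s t (a :: q) = nonzero_path n x y s t (a :: q).
Proof.
move=> Ha; rewrite /nonzero_path /= Ha (valid_arrowS Ha) /=.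
by case Hc: (ok_chain a q); rewrite ?andbF // (all_valid_chain (valid_arrowS Ha) Hc).
Qed.

Lemma nonzero_path_new n s t a q : a \in new_arrows n ->
  nonzero_path n.+1 x y s t (a :: q) = (src a == s) && nonzero_path n x y (tgt a) t q.
Proof.
rewrite mem_new_arrows => /andP [Ha Hna].
rewrite /nonzero_path /= Ha /=; case: q => [|b q] /=.
  have -> : (tgt a == 1) || (tgt a == 2) by rewrite /tgt; case: ifP.
  by rewrite !andbT.
case Hb: (valid n b); last first.
  case Hb1: (valid n.+1 b); rewrite ?andbF //=.
  case Hab: (ok a b); last by rewrite !(andbF, andFb).
  by rewrite (ok_valid_arrow Ha Hb1 Hab) in Hb.
rewrite (valid_arrowS Hb) (ok_new_arrow Ha Hna Hb) /=.
case Hc: (ok_chain b q); rewrite ?andbF // (all_valid_chain (valid_arrowS Hb) Hc).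
by rewrite (eq_sym (src b)); case: (all _ q); case: (src a == s); rewrite /= ?andbT // andbC.
Qed.

Lemma nonzero_pathS n s t p : nonzero_path n.+1 x y s t p =
  nonzero_path n x y s t p ||
  (s == new_src n) && prepend (new_arrows n) (nonzero_path n x y (new_tgt n) t) p.
Proof.
case: p => [|a q]; first by rewrite andbF orbF.
case Hnew: (a \in new_arrows n).
  have [Hs Ht] := new_arrow_ends Hnew.
  have Hold : nonzero_path n x y s t (a :: q) = false.
    by move: Hnew; rewrite mem_new_arrows /nonzero_path /= => /andP [_ /negbTE ->].
  by rewrite nonzero_path_new // Hold /= Hnew Hs Ht eq_sym.
rewrite /= Hnew andbF orbF; case Ha: (valid n a); first exact: nonzero_path_old.
move: Hnew; rewrite mem_new_arrows Ha andbT => Ha1.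
by rewrite /nonzero_path /= Ha Ha1.
Qed.

Lemma has_card_nonzero_pathS n s t N N' :
  has_card (nonzero_path n x y s t) N ->
  has_card (nonzero_path n x y (new_tgt n) t) N' ->
  has_card (nonzero_path n.+1 x y s t) (N + (s == new_src n) * (size (new_arrows n) * N')).
Proof.
move=> HN HN'; apply: has_card_ext (fun p => esym (nonzero_pathS n s t p)) _.
apply: has_card_or HN (has_card_andl _ (has_card_prepend (new_arrows_uniq n) HN')).
move=> [|a q] /=; first by rewrite andbF.
by case/andP => /andP [Ha _] _; rewrite mem_new_arrows Ha andbF andbC.
Qed.

End NonzeroPaths.

Lemma mul_mx2 a b c d a' b' c' d' :
  (mx2 a b c d *m mx2 a' b' c' d')%R =
  mx2 (a * a' + b * c') (a * b' + b * d') (c * a' + d * c') (c * b' + d * d').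
Proof.
apply/matrixP => i j; rewrite !mxE !big_ord_recr big_ord0 !mxE.
by case: i => [[|[|//]] ?]; case: j => [[|[|//]] ?].
Qed.

Section CartanRecursion.
Variables x y : nat -> nat.

Lemma is_cartan_inj n C D : is_cartan n x y C -> is_cartan n x y D -> C = D.
Proof. by move=> HC HD; apply/matrixP => i j; exact: has_card_inj (HC i j) (HD i j). Qed.

Lemma is_cartan0 : is_cartan 0 x y (mx2 1 0 0 1).
Proof.
move=> i j; rewrite mxE.
exists (if i == j then [:: [::]] else [::]); split.
- by case: ifP.
- case=> [|a q].
    rewrite /nonzero_path /=.
    by case: i => [[|[|//]] ?]; case: j => [[|[|//]] ?].
  rewrite /nonzero_path /= valid_arrow0 /=.
  by case: ifP.
- by case: i => [[|[|//]] ?]; case: j => [[|[|//]] ?].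
Qed.

Definition step_mx n : 'M[nat]_2 :=
  if odd n then mx2 1 (y n.+1./2) 0 1 else mx2 1 0 (x n./2.+1) 1.

Lemma is_cartanS n C : is_cartan n x y C -> is_cartan n.+1 x y (C *m step_mx n)%R.
Proof.
move=> HC i j.
pose k : 'I_2 := if odd n then ord0 else ord_max.
have Hk : has_card (nonzero_path n x y (new_tgt n) (vtx i)) (C i k).
  rewrite /new_tgt /k; case: (odd n); [exact: HC i ord0 | exact: HC i ord_max].
suff -> : (C *m step_mx n)%R i j =
          C i j + (vtx j == new_src n) * (size (new_arrows x y n) * C i k).
  exact: has_card_nonzero_pathS (HC i j) Hk.
have [->|->] : j = ord0 \/ j = ord_max.
  by case: j => [[|[|//]] Hj]; [left | right]; apply: val_inj.
all: rewrite mxE !big_ord_recr big_ord0 /= (_ : widen_ord _ _ = ord0); last exact: val_inj.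
all: by rewrite /step_mx size_new_arrows /new_src /k; case: (odd n); rewrite !mxE /=; lia.
Qed.

End CartanRecursion.

Lemma FibSS u v k :
  Fib k.+2 u v = Fib k u v + Fib k.+1 u v * (if odd k then v k.+2./2 else u k.+2./2).
Proof. by rewrite /Fib /=; case: (fib2 u v k) => a b /=; rewrite negbK. Qed.

Lemma Fib_evenS u v m : Fib m.*2.+2 u v = Fib m.*2 u v + Fib m.*2.+1 u v * u m.+1.
Proof. by rewrite FibSS odd_double /= doubleK. Qed.

Lemma Fib_oddS u v m : Fib m.*2.+3 u v = Fib m.*2.+1 u v + Fib m.*2.+2 u v * v m.+1.
Proof. by rewrite FibSS /= odd_double /= uphalf_double. Qed.

Section CartanFibonacci.
Variables x y : nat -> nat.

Definition cartan_odd m : 'M[nat]_2 :=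
  mx2 (Fib m.*2.+1 y (shiftS x)) (Fib m.*2 y (shiftS x)) (Fib m.*2.+2 x y) (Fib m.*2.+1 x y).

Definition cartan_even m : 'M[nat]_2 :=
  mx2 (Fib m.*2.+1 y (shiftS x)) (Fib m.*2.+2 y (shiftS x)) (Fib m.*2.+2 x y) (Fib m.*2.+3 x y).

Lemma step_mx_double m : step_mx x y m.*2 = mx2 1 0 (x m.+1) 1.
Proof. by rewrite /step_mx odd_double doubleK. Qed.

Lemma step_mx_doubleS m : step_mx x y m.*2.+1 = mx2 1 (y m.+1) 0 1.
Proof. by rewrite /step_mx /= odd_double /= doubleK. Qed.

Lemma cartan_oddM m : (cartan_odd m *m step_mx x y m.*2.+1)%R = cartan_even m.
Proof.
rewrite step_mx_doubleS mul_mx2 /cartan_even (Fib_evenS y _ m) (Fib_oddS x y m).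
congr mx2; lia.
Qed.

Lemma cartan_evenM m : (cartan_even m *m step_mx x y m.*2.+2)%R = cartan_odd m.+1.
Proof.
rewrite -doubleS step_mx_double mul_mx2 /cartan_odd (Fib_evenS x y m.+1) doubleS (Fib_oddS y _ m).
congr mx2; rewrite /shiftS; lia.
Qed.

Lemma is_cartan_odd m : is_cartan m.*2.+1 x y (cartan_odd m).
Proof.
elim: m => [|m IH].
  have -> : cartan_odd 0 = (mx2 1 0 0 1 *m step_mx x y 0)%R.
    by rewrite (step_mx_double 0) mul_mx2 /cartan_odd /Fib /=.
  exact: is_cartanS (is_cartan0 x y).
rewrite -cartan_evenM -cartan_oddM doubleS.
exact: is_cartanS (is_cartanS IH).
Qed.

Lemma is_cartan_even m : is_cartan m.*2.+2 x y (cartan_even m).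
Proof. rewrite -cartan_oddM; exact: is_cartanS (is_cartan_odd m). Qed.

End CartanFibonacci.

Theorem lemma4p1 (x y : nat -> nat)
  (hx : forall i, 0 < i -> 0 < x i) (hy : forall i, 0 < i -> 0 < y i) :
  (forall m, 0 < m ->
     is_cartan m.*2 x y
       (mx2 (Fib m.*2.-1 y (shiftS x)) (Fib m.*2 y (shiftS x))
            (Fib m.*2 x y)             (Fib m.*2.+1 x y))
     /\ (forall C D : 'M[nat]_2, is_cartan m.*2.-1 x y C -> is_cartan m.*2 x y D ->
           D = (C *m mx2 1 (y m) 0 1)%R))
  /\
  (forall m,
     is_cartan m.*2.+1 x y
       (mx2 (Fib m.*2.+1 y (shiftS x)) (Fib m.*2 y (shiftS x))
            (Fib m.*2.+2 x y)           (Fib m.*2.+1 x y))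
     /\ (forall C D : 'M[nat]_2, is_cartan m.*2 x y C -> is_cartan m.*2.+1 x y D ->
           D = (C *m mx2 1 0 (x m.+1) 1)%R)).
Proof.
split=> [[//|m] _ | m]; split.
- rewrite doubleS; exact: is_cartan_even.
- move=> C D HC HD; rewrite -(step_mx_doubleS x).
  by apply: is_cartan_inj HD _; rewrite doubleS; exact: is_cartanS.
- exact: is_cartan_odd.
- move=> C D HC HD; rewrite -(step_mx_double _ y).
  exact: is_cartan_inj HD (is_cartanS HC).
Qed.
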